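(* Let $x,y$ be fixed real (or complex) numbers. For each such $x$ let $\kappa_x:\mathbb{Z}_{>0}\to\mathbb{C}$ be the recursive divisor function defined by $$\kappa_x(n) = n^x + \sum_{d \mid n,\ d<n} \kappa_x(d)\qquad (n\ge 1).$$ Then the following identities of arithmetic functions hold: 1. $\kappa_x * \sigma_y = \kappa_y * \sigma_x$; 2. $\kappa_x = (\mathrm{id}_x + \mathbf{1} * \kappa_x)/2$; 3. $\kappa_x = \dfrac{\mathrm{id}_x}{2} + \dfrac{\mathbf{1}*\mathrm{id}_x}{2^2} + \dfrac{\mathbf{1}*\mathbf{1}*\mathrm{id}_x}{2^3} + \cdots$, i.e. $\kappa_x(n)=\sum_{k\ge 0} 2^{-(k+1)}(\mathbf{1}^{*k}*\mathrm{id}_x)(n)$ for every $n$, where $\mathbf{1}^{*k}$ is the $k$-fold Dirichlet convolution power of $\mathbf{1}$ (with $\mathbf{1}^{*0}=\varepsilon$); 4. $\kappa_x = J_x * \kappa_0$; 5. $\kappa_x^{-1} = J_x^{-1} * (2\mu - \varepsilon)$; 6. $\sigma_x = \kappa_x * (2\cdot\mathbf{1} - d)$.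
   Context: Arithmetic functions are functions $\mathbb{Z}_{>0}\to\mathbb{C}$, added and scaled pointwise. $f*g$ denotes Dirichlet convolution, $(f*g)(n)=\sum_{d\mid n} f(d)g(n/d)$, and $f^{-1}$ denotes the Dirichlet inverse of $f$ (which exists when $f(1)\neq 0$). Notation: $\varepsilon(n)=1$ if $n=1$ and $0$ otherwise; $\mathbf{1}(n)=1$ for all $n$; $\mathrm{id}_x(n)=n^x$; $\mu$ is the Möbius function; $\sigma_x(n)=\sum_{d\mid n} d^x$; $d(n)=\sigma_0(n)$ is the number of divisors of $n$; $J_x=\mu*\mathrm{id}_x$ is Jordan's totient function (so $J_0=\varepsilon$ and $J_1=\phi$); $\kappa_0$ is $\kappa_x$ with $x=0$. *)

From Stdlib Require Import Reals.
From Coquelicot Require Import Coquelicot.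
From mathcomp Require Import ssreflect ssrfun ssrbool eqtype ssrnat seq div prime.

(* Arithmetic functions Z_{>0} -> C are represented as nat -> C;
   the value at 0 is irrelevant and never constrained. *)
Definition arith := nat -> C.

Definition sumC (l : seq nat) (F : nat -> C) : C :=
  foldr (fun d acc => Cplus (F d) acc) (RtoC 0) l.

Definition dconv (f g : arith) : arith :=
  fun n => sumC (divisors n) (fun d => Cmult (f d) (g ((n %/ d)%N))).

Definition aeq (f g : arith) : Prop := forall n : nat, (0 < n)%N -> f n = g n.

(* principal complex power n^z = exp(z log n) for a positive integer n *)
Definition cpow (n : nat) (z : C) : C :=
  let L := ln (INR n) in
  Cmult (RtoC (exp (Re z * L)%R)) (cos (Im z * L)%R, sin (Im z * L)%R).

Definition idf (x : C) : arith := fun n => cpow n x.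
Definition epsf : arith := fun n => if (n == 1)%N then RtoC 1 else RtoC 0.
Definition onef : arith := fun _ => RtoC 1.

Definition moebius : arith := fun n =>
  if all (fun p => (logn p n == 1)%N) (primes n)
  then RtoC ((-1) ^ size (primes n))%R else RtoC 0.

Definition dsigma (x : C) : arith := fun n => sumC (divisors n) (fun d => cpow d x).
Definition ndiv : arith := dsigma (RtoC 0).

Definition jordan (x : C) : arith := dconv moebius (idf x).

(* recursive divisor function:
   kappa_x(n) = n^x + sum_{d | n, d < n} kappa_x(d); fuel-based, with fuel n
   sufficient since proper divisors are smaller. *)
Fixpoint kappa_aux (fuel : nat) (x : C) (n : nat) : C :=
  match fuel with
  | 0 => RtoC 0
  | S k => Cplus (cpow n x)
             (sumC (filter (fun d => (d < n)%N) (divisors n)) (fun d => kappa_aux k x d))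
  end.
Definition kappa (x : C) : arith := fun n => kappa_aux n x n.

(* Dirichlet inverse (for f(1) <> 0):
   f^{-1}(1) = 1/f(1), f^{-1}(n) = -1/f(1) * sum_{d|n, d<n} f(n/d) f^{-1}(d). *)
Fixpoint dinv_aux (fuel : nat) (f : arith) (n : nat) : C :=
  match fuel with
  | 0 => RtoC 0
  | S k => if (n == 1)%N then Cinv (f 1%N)
           else Cmult (Copp (Cinv (f 1%N)))
                  (sumC (filter (fun d => (d < n)%N) (divisors n))
                        (fun d => Cmult (f ((n %/ d)%N)) (dinv_aux k f d)))
  end.
Definition dinv (f : arith) : arith := fun n => dinv_aux n f n.

Definition onepow (k : nat) : arith := iter k (dconv onef) epsf.

Definition addf (f g : arith) : arith := fun n => Cplus (f n) (g n).
Definition subf (f g : arith) : arith := fun n => Cminus (f n) (g n).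
Definition scalf (c : C) (f : arith) : arith := fun n => Cmult c (f n).

(* The recursion says (kappa_x * 1)(n) = 2 kappa_x(n) - n^x, i.e. kappa_x * (2 eps - 1) = id_x,
   so kappa_x = id_x * (2 eps - 1)^-1.  Identities 1, 2, 4, 5 and 6 are then rearrangements
   in the commutative monoid of arithmetic functions under Dirichlet convolution, using
   sigma_y = id_y * 1, mu * 1 = eps, d = 1 * 1 and 2 mu - eps = mu * (2 eps - 1).
   For 3, the partial sums S_K(n) of the series satisfy
   S_(K+1)(n) = (n^x + sum_(d | n, d < n) S_K(d) + S_K(n)) / 2;
   by strong induction on n the first two terms tend to kappa_x(n), and averaging a
   convergent sequence with the running value forces S_K(n) -> kappa_x(n) as well. *)

From Stdlib Require Import Reals Lra Morphisms Setoid.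
From Coquelicot Require Import Coquelicot.
From HB Require Import structures.
From mathcomp Require Import ssreflect ssrfun ssrbool eqtype ssrnat seq div prime bigop.

Local Open Scope nat_scope.

HB.instance Definition _ :=
  Monoid.isComLaw.Build C (RtoC 0) Cplus Cplus_assoc Cplus_comm Cplus_0_l.
HB.instance Definition _ := Monoid.isMulLaw.Build C (RtoC 0) Cmult Cmult_0_l Cmult_0_r.
HB.instance Definition _ :=
  Monoid.isAddLaw.Build C Cmult Cplus Cmult_plus_distr_r Cmult_plus_distr_l.

Notation "\sum_ ( i <- r | P ) F" := (\big[Cplus/RtoC 0]_(i <- r | P%B) F%C) : C_scope.
Notation "\sum_ ( i <- r ) F" := (\big[Cplus/RtoC 0]_(i <- r) F%C) : C_scope.

Lemma sumCE l F : sumC l F = (\sum_(d <- l) F d)%C.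
Proof. by elim: l => [|d l IH]; rewrite ?big_nil ?big_cons //= IH. Qed.

Lemma big_Copp (I : Type) (r : seq I) (P : pred I) (F : I -> C) :
  (\sum_(i <- r | P i) - F i = - \sum_(i <- r | P i) F i)%C.
Proof. by elim/big_rec2: _ => [|i x y _ ->]; ring. Qed.

(** * Sums over divisors *)

Lemma divisors1 : divisors 1 = [:: 1].
Proof. by []. Qed.

Definition proper_divisors n := [seq d <- divisors n | d < n].

Lemma mem_proper_divisors n d : d \in proper_divisors n -> 0 < d < n.
Proof.
rewrite mem_filter => /andP[lt_dn]; have n_gt0 : 0 < n by apply: leq_ltn_trans lt_dn.
by rewrite -dvdn_divisors // => /(dvdn_gt0 n_gt0) ->.
Qed.

Lemma big_divisors_proper (R : Type) (idx : R) (op : Monoid.com_law idx) n F :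
  0 < n ->
  \big[op/idx]_(d <- divisors n) F d = op (F n) (\big[op/idx]_(d <- proper_divisors n) F d).
Proof.
move=> n_gt0; rewrite (bigD1_seq n) ?divisors_id ?divisors_uniq // big_filter.
congr (op _ _); rewrite big_seq_cond [RHS]big_seq_cond; apply: eq_bigl => d.
rewrite -dvdn_divisors //; case: (boolP (d %| n)) => //= dvd_dn.
by rewrite ltn_neqAle dvdn_leq // andbT.
Qed.

Lemma perm_divisors_cofactor n :
  0 < n -> perm_eq (divisors n) [seq n %/ d | d <- divisors n].
Proof.
move=> n_gt0; have cofactorK d : d %| n -> n %/ (n %/ d) = d.
  by move=> dvd_dn; rewrite divnA // mulKn.
apply: uniq_perm => [||d]; rewrite ?divisors_uniq //.
  rewrite map_inj_in_uniq ?divisors_uniq // => d e.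
  by rewrite -!dvdn_divisors // => /cofactorK {2}<- /cofactorK {2}<- ->.
rewrite -dvdn_divisors //; apply/idP/mapP => [dvd_dn | [e]].
  by exists (n %/ d); rewrite ?cofactorK // -dvdn_divisors ?dvdn_div.
by rewrite -dvdn_divisors // => /dvdn_div + ->.
Qed.

Lemma perm_divisors_dvd n d :
  0 < n -> d %| n -> perm_eq (divisors d) [seq e <- divisors n | e %| d].
Proof.
move=> n_gt0 dvd_dn; have d_gt0 := dvdn_gt0 n_gt0 dvd_dn.
apply: uniq_perm => [||e]; rewrite ?filter_uniq ?divisors_uniq //.
rewrite mem_filter -!dvdn_divisors //; apply/idP/andP => [dvd_ed | [] //].
by split=> //; apply: dvdn_trans dvd_dn.
Qed.

Lemma perm_divisors_multiples n e : 0 < n -> e %| n ->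
  perm_eq [seq d <- divisors n | e %| d] [seq e * k | k <- divisors (n %/ e)].
Proof.
move=> n_gt0 dvd_en; have e_gt0 := dvdn_gt0 n_gt0 dvd_en.
have ne_gt0 : 0 < n %/ e by rewrite divn_gt0 // dvdn_leq.
apply: uniq_perm => [||d]; rewrite ?filter_uniq ?divisors_uniq //.
  by rewrite map_inj_uniq ?divisors_uniq // => k l /eqP; rewrite eqn_pmul2l // => /eqP.
rewrite mem_filter -dvdn_divisors //; apply/andP/mapP => [[dvd_ed dvd_dn] | [k]].
  exists (d %/ e); last by rewrite mulnC divnK.
  by rewrite -dvdn_divisors // dvdn_divLR // divnK.
rewrite -dvdn_divisors // => dvd_k -> ; split; first exact: dvdn_mulr.
by rewrite -(divnK dvd_en) mulnC dvdn_pmul2r.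
Qed.

(** * Dirichlet convolution *)

Lemma dconvE f g n : dconv f g n = (\sum_(d <- divisors n) f d * g (n %/ d))%C.
Proof. exact: sumCE. Qed.

Lemma dconvC_at f g n : 0 < n -> dconv f g n = dconv g f n.
Proof.
move=> n_gt0; rewrite !dconvE (perm_big _ (perm_divisors_cofactor _ n_gt0)) big_map.
apply: eq_big_seq => d; rewrite -dvdn_divisors // => dvd_dn.
by rewrite divnA // mulKn // Cmult_comm.
Qed.

Lemma dconvA_at f g h n : 0 < n -> dconv (dconv f g) h n = dconv f (dconv g h) n.
Proof.
move=> n_gt0; rewrite !dconvE.
transitivity (\sum_(d <- divisors n)
                \sum_(e <- divisors n | e %| d) f e * g (d %/ e) * h (n %/ d))%C.
  apply: eq_big_seq => d; rewrite -dvdn_divisors // => dvd_dn.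
  rewrite dconvE big_distrl -[RHS]big_filter; exact/perm_big/perm_divisors_dvd.
rewrite (exchange_big_dep xpredT) //=; apply: eq_big_seq => e.
rewrite -dvdn_divisors // => dvd_en.
rewrite dconvE big_distrr -big_filter (perm_big _ (perm_divisors_multiples _ _ n_gt0 dvd_en)).
rewrite big_map; apply: eq_bigr => k _.
by rewrite mulKn ?(dvdn_gt0 n_gt0 dvd_en) // divnMA -Cmult_assoc.
Qed.

#[export] Instance aeq_equiv : Equivalence aeq.
Proof.
split=> [f n | f g fg n n_gt0 | f g h fg gh n n_gt0] //.
- by rewrite fg.
- by rewrite fg // gh.
Qed.

#[export] Instance dconv_proper : Proper (aeq ==> aeq ==> aeq) dconv.
Proof.
move=> f f' ff' g g' gg' n n_gt0; rewrite !dconvE; apply: eq_big_seq => d.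
rewrite -dvdn_divisors // => dvd_dn; have d_gt0 := dvdn_gt0 n_gt0 dvd_dn.
by rewrite ff' // gg' // divn_gt0 // dvdn_leq.
Qed.

#[export] Instance subf_proper : Proper (aeq ==> aeq ==> aeq) subf.
Proof. by move=> f f' ff' g g' gg' n n_gt0; rewrite /subf ff' ?gg'. Qed.

#[export] Instance scalf_proper c : Proper (aeq ==> aeq) (scalf c).
Proof. by move=> f f' ff' n n_gt0; rewrite /scalf ff'. Qed.

Lemma dconvC f g : aeq (dconv f g) (dconv g f).
Proof. by move=> n; apply: dconvC_at. Qed.

Lemma dconvA f g h : aeq (dconv (dconv f g) h) (dconv f (dconv g h)).
Proof. by move=> n; apply: dconvA_at. Qed.

Lemma dconvACA f g h k :
  aeq (dconv (dconv f g) (dconv h k)) (dconv (dconv f h) (dconv g k)).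
Proof. by rewrite !dconvA -(dconvA g) (dconvC g) dconvA. Qed.

Lemma dconv_epsr f : aeq (dconv f epsf) f.
Proof.
move=> n n_gt0; rewrite dconvE big_divisors_proper // divnn n_gt0 /epsf /=.
rewrite big1_seq; first by ring.
move=> d /andP[_]; rewrite mem_filter -dvdn_divisors // => /andP[lt_dn dvd_dn].
have /gtn_eqF -> : 1 < n %/ d by rewrite ltn_divRL // mul1n.
exact: Cmult_0_r.
Qed.

Lemma dconv_epsl f : aeq (dconv epsf f) f.
Proof. by rewrite dconvC dconv_epsr. Qed.

Lemma dconvBr f g h : aeq (dconv h (subf f g)) (subf (dconv h f) (dconv h g)).
Proof.
move=> n _; rewrite /subf /Cminus !dconvE -big_Copp -big_split.
by apply: eq_bigr => d _ /=; ring.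
Qed.

Lemma dconvZr c f h : aeq (dconv h (scalf c f)) (scalf c (dconv h f)).
Proof. by move=> n _; rewrite /scalf !dconvE big_distrr; apply: eq_bigr => d _ /=; ring. Qed.

(** * The Moebius function and Dirichlet inverses *)

Lemma moebius1 : moebius 1 = RtoC 1.
Proof. by []. Qed.

Lemma moebius_prime_mul_dvd p e : prime p -> 0 < e -> p %| e -> moebius (p * e) = RtoC 0.
Proof.
move=> p_pr e_gt0 dvd_pe; rewrite /moebius; case: ifP => // /allP all_simple.
have pe_gt0 : 0 < p * e by rewrite muln_gt0 prime_gt0.
have /all_simple : p \in primes (p * e) by rewrite mem_primes p_pr pe_gt0 dvdn_mulr.
rewrite lognM ?(prime_gt0 p_pr) // logn_prime // eqxx add1n eqSS -leqn0 leqNgt logn_gt0.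
by rewrite mem_primes p_pr e_gt0 dvd_pe.
Qed.

Lemma moebius_prime_mul_ndvd p e :
  prime p -> 0 < e -> ~~ (p %| e) -> moebius (p * e) = Copp (moebius e).
Proof.
move=> p_pr e_gt0 ndvd_pe; have p_gt0 := prime_gt0 p_pr.
have pe_gt0 : 0 < p * e by rewrite muln_gt0 p_gt0.
have primes_pe : perm_eq (primes (p * e)) (p :: primes e).
  apply: uniq_perm => [||q]; rewrite /= ?primes_uniq ?mem_primes ?p_pr ?e_gt0 //.
    by rewrite (negbTE ndvd_pe).
  rewrite in_cons !mem_primes pe_gt0 e_gt0 /=.
  have [q_pr|] := boolP (prime q); last by case: eqP => // ->; rewrite p_pr.
  by rewrite Euclid_dvdM // dvdn_prime2.
rewrite /moebius (perm_size primes_pe) (perm_all _ primes_pe) /=.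
rewrite lognM // logn_prime // eqxx logn_coprime ?prime_coprime //=.
have -> : all (fun q => logn q (p * e) == 1) (primes e)
          = all (fun q => logn q e == 1) (primes e).
  apply: eq_in_all => q; rewrite mem_primes => /and3P[q_pr _ dvd_qe].
  rewrite lognM // logn_prime //; case: (q =P p) => // eq_qp.
  by move: ndvd_pe; rewrite -eq_qp dvd_qe.
by case: ifP => _; rewrite /Copp /RtoC /=; f_equal; ring.
Qed.

Lemma moebius_dconv_one : aeq (dconv moebius onef) epsf.
Proof.
move=> n n_gt0; rewrite dconvE /epsf.
under eq_bigr do rewrite /onef Cmult_1_r.
case: (ltngtP n 1) => [| n_gt1 | ->]; first by rewrite ltnNge n_gt0.
  set p := pdiv n; set m := n %/ p.
  have p_pr : prime p by apply: pdiv_prime.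
  have dvd_pn : p %| n by apply: pdiv_dvd.
  have n_pm : n = p * m by rewrite /m mulnC divnK.
  have m_gt0 : 0 < m by move: n_gt0; rewrite n_pm muln_gt0 => /andP[].
  have sum_dvd_p : (\sum_(d <- divisors n | p %| d) moebius d
                     = - \sum_(e <- divisors m | ~~ (p %| e)) moebius e)%C.
    rewrite -big_filter (perm_big _ (perm_divisors_multiples _ _ n_gt0 dvd_pn)) big_map.
    rewrite (bigID (dvdn p)) /= big1_seq => [|e /andP[dvd_pe]]; last first.
      by rewrite -dvdn_divisors // => /(dvdn_gt0 m_gt0) /moebius_prime_mul_dvd ->.
    rewrite Cplus_0_l -big_Copp.
    rewrite big_seq_cond [RHS]big_seq_cond; apply: eq_bigr => e /andP[+ ndvd_pe].
    rewrite -dvdn_divisors // => dvd_em.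
    exact: moebius_prime_mul_ndvd (dvdn_gt0 m_gt0 dvd_em) ndvd_pe.
  have sum_ndvd_p : (\sum_(d <- divisors n | ~~ (p %| d)) moebius d
                        = \sum_(e <- divisors m | ~~ (p %| e)) moebius e)%C.
    rewrite -[LHS]big_filter -[RHS]big_filter.
    apply/perm_big/uniq_perm => [||d]; rewrite ?filter_uniq ?divisors_uniq //.
    rewrite !mem_filter -!dvdn_divisors //; case: (boolP (p %| d)) => //= ndvd_pd.
    by rewrite n_pm Gauss_dvdr // coprime_sym prime_coprime.
  by rewrite (bigID (dvdn p)) /= sum_dvd_p sum_ndvd_p; ring.
by rewrite divisors1 big_seq1 moebius1; ring.
Qed.

Lemma dinv_aux_fuel f k l n : 0 < n -> n <= k -> n <= l -> dinv_aux k f n = dinv_aux l f n.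
Proof.
elim: k l n => [|k IH] [|l] [|n] //= _ le_nk le_nl; case: ifP => // _.
rewrite !sumCE; congr Cmult; apply: eq_big_seq => d /mem_proper_divisors /andP[d_gt0 lt_dn].
by congr Cmult; apply: IH; rewrite // -ltnS (leq_trans lt_dn).
Qed.

Lemma dinv_rec f n : 1 < n ->
  dinv f n = (- / f 1 * \sum_(d <- proper_divisors n) f (n %/ d) * dinv f d)%C.
Proof.
case: n => [//|n] n_gt1; rewrite /dinv /= (gtn_eqF n_gt1) sumCE.
congr Cmult; apply: eq_big_seq => d /mem_proper_divisors /andP[d_gt0 lt_dn].
by congr Cmult; apply: dinv_aux_fuel.
Qed.

Lemma dconv_dinv f : f 1 <> RtoC 0 -> aeq (dconv f (dinv f)) epsf.
Proof.
move=> f1_neq0 n n_gt0.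
rewrite dconvC_at // dconvE big_divisors_proper // divnn n_gt0 /epsf /=.
case: (ltngtP n 1) => [| n_gt1 | ->]; first by rewrite ltnNge n_gt0.
  rewrite dinv_rec //.
  under eq_bigr do rewrite Cmult_comm.
  by field.
by rewrite /proper_divisors divisors1 /= big_nil /dinv /=; field.
Qed.

Lemma dinv_unique f g : f 1 <> RtoC 0 -> aeq (dconv f g) epsf -> aeq (dinv f) g.
Proof.
move=> f1_neq0 fg_eps.
by rewrite -[dinv f]dconv_epsr -fg_eps -dconvA (dconvC _ f) dconv_dinv // dconv_epsl.
Qed.

(** * The recursive divisor function *)

Lemma cpow0 n : cpow n (RtoC 0) = RtoC 1.
Proof. by rewrite /cpow /= !Rmult_0_l exp_0 cos_0 sin_0 Cmult_1_l. Qed.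

Lemma cpow1 x : cpow 1 x = RtoC 1.
Proof. by rewrite /cpow /= ln_1 !Rmult_0_r exp_0 cos_0 sin_0 Cmult_1_l. Qed.

Lemma idf0 : aeq (idf (RtoC 0)) onef.
Proof. by move=> n _; rewrite /idf cpow0. Qed.

Lemma dsigmaE x : aeq (dsigma x) (dconv (idf x) onef).
Proof.
by move=> n _; rewrite /dsigma sumCE dconvE; apply: eq_bigr => d _; rewrite Cmult_1_r.
Qed.

Lemma ndivE : aeq ndiv (dconv onef onef).
Proof. by rewrite /ndiv dsigmaE idf0. Qed.

Lemma jordan1 x : jordan x 1 = RtoC 1.
Proof. by rewrite /jordan dconvE divisors1 big_seq1 moebius1 /idf cpow1 Cmult_1_l. Qed.

Lemma kappa_aux_fuel x k l n :
  0 < n -> n <= k -> n <= l -> kappa_aux k x n = kappa_aux l x n.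
Proof.
elim: k l n => [|k IH] [|l] [|n] //= _ le_nk le_nl.
rewrite !sumCE; congr Cplus; apply: eq_big_seq => d /mem_proper_divisors /andP[d_gt0 lt_dn].
by apply: IH; rewrite // -ltnS (leq_trans lt_dn).
Qed.

Lemma kappa_rec x n : 0 < n ->
  kappa x n = (cpow n x + \sum_(d <- proper_divisors n) kappa x d)%C.
Proof.
case: n => [//|n] _; rewrite /kappa /= sumCE; congr Cplus.
apply: eq_big_seq => d /mem_proper_divisors /andP[d_gt0 lt_dn].
exact: kappa_aux_fuel.
Qed.

Lemma kappa1 x : kappa x 1 = RtoC 1.
Proof. by rewrite kappa_rec // cpow1 /proper_divisors divisors1 /= big_nil Cplus_0_r. Qed.

Lemma kappa_dconv_one x n : 0 < n ->
  dconv (kappa x) onef n = (RtoC 2 * kappa x n - cpow n x)%C.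
Proof.
move=> n_gt0; rewrite dconvE big_divisors_proper //= (kappa_rec _ _ n_gt0).
by rewrite /onef -big_distrl /=; ring.
Qed.

Definition two_eps_sub_one : arith := subf (scalf (RtoC 2) epsf) onef.

Lemma dconv_two_eps_sub_one f :
  aeq (dconv f two_eps_sub_one) (subf (scalf (RtoC 2) f) (dconv f onef)).
Proof. by rewrite /two_eps_sub_one dconvBr dconvZr dconv_epsr. Qed.

Lemma kappa_dconv_two_eps_sub_one x : aeq (dconv (kappa x) two_eps_sub_one) (idf x).
Proof.
rewrite dconv_two_eps_sub_one => n n_gt0.
by rewrite /subf /scalf kappa_dconv_one // /idf; ring.
Qed.

Lemma two_eps_sub_one1_neq0 : two_eps_sub_one 1 <> RtoC 0.
Proof.
by rewrite /two_eps_sub_one /subf /scalf /epsf /onef /=; move=> [] /=; lra.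
Qed.

Lemma kappaE x : aeq (kappa x) (dconv (idf x) (dinv two_eps_sub_one)).
Proof.
rewrite -(kappa_dconv_two_eps_sub_one x) dconvA dconv_dinv ?dconv_epsr //.
exact: two_eps_sub_one1_neq0.
Qed.

Lemma moebius_dconv_two_eps_sub_one :
  aeq (dconv moebius two_eps_sub_one) (subf (scalf (RtoC 2) moebius) epsf).
Proof. by rewrite dconv_two_eps_sub_one moebius_dconv_one. Qed.

Lemma kappa_dsigmaC x y : aeq (dconv (kappa x) (dsigma y)) (dconv (kappa y) (dsigma x)).
Proof.
rewrite !kappaE !dsigmaE (dconvACA (idf x)) (dconvACA (idf y)).
by rewrite (dconvC (idf x) (idf y)).
Qed.

Lemma kappa_mean x :
  aeq (kappa x) (scalf (Cinv (RtoC 2)) (addf (idf x) (dconv onef (kappa x)))).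
Proof.
move=> n n_gt0; rewrite /scalf /addf dconvC_at // kappa_dconv_one // /idf.
by field; move=> [] /=; lra.
Qed.

Lemma kappa_jordan x : aeq (kappa x) (dconv (jordan x) (kappa (RtoC 0))).
Proof.
by rewrite /jordan !kappaE idf0 (dconvACA moebius) moebius_dconv_one dconv_epsl.
Qed.

Lemma dinv_kappa x :
  aeq (dinv (kappa x)) (dconv (dinv (jordan x)) (subf (scalf (RtoC 2) moebius) epsf)).
Proof.
apply: dinv_unique; first by rewrite kappa1; exact: C1_nz.
rewrite -moebius_dconv_two_eps_sub_one kappaE (dconvACA (idf x)).
rewrite (dconvC (dinv _)) (dconvA moebius) dconv_dinv; last exact: two_eps_sub_one1_neq0.
rewrite dconv_epsr dconvC -dconvA -/(jordan x) dconv_dinv // jordan1; exact: C1_nz.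
Qed.

Lemma dsigma_kappa x :
  aeq (dsigma x) (dconv (kappa x) (subf (scalf (RtoC 2) onef) ndiv)).
Proof.
rewrite ndivE -dconv_two_eps_sub_one (dconvC onef) -dconvA.
by rewrite kappa_dconv_two_eps_sub_one dsigmaE.
Qed.

(** * The series expansion *)

Lemma is_lim_seq_mean_step (u c : nat -> R) (l : R) :
  is_lim_seq c l -> (forall K, u K.+1 = (c K + u K) / 2)%R -> is_lim_seq u l.
Proof.
move=> /is_lim_seq_spec c_lim u_step; apply/is_lim_seq_spec => eps.
have eps2_gt0 : (0 < eps / 2)%R by case: eps => /= e; lra.
have [N c_near] := c_lim (mkposreal _ eps2_gt0); rewrite /= in c_near.
have u_near j : (Rabs (u (N + j)%N - l) <= Rabs (u N - l) * (/ 2) ^ j + eps / 2)%R.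
  elim: j => [|j IH]; first by rewrite addn0 /=; lra.
  have c_Nj := c_near (N + j)%N (leP (leq_addr j N)).
  have geom_ge0 := pow_le (/ 2) j ltac:(lra).
  have -> : (u (N + j.+1)%N - l = / 2 * (c (N + j)%N - l) + / 2 * (u (N + j)%N - l))%R.
    by rewrite addnS u_step; field.
  apply: Rle_trans (Rabs_triang _ _) _; rewrite !Rabs_mult Rabs_pos_eq /=; nra.
have /is_lim_seq_spec geom_lim : is_lim_seq (fun j => Rabs (u N - l) * (/ 2) ^ j)%R 0%R.
  rewrite -(Rmult_0_r (Rabs (u N - l))).
  apply: is_lim_seq_mult'; first exact: is_lim_seq_const.
  by apply: is_lim_seq_geom; rewrite Rabs_pos_eq; lra.
have [J geom_near] := geom_lim (mkposreal _ eps2_gt0); rewrite /= in geom_near.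
exists (N + J)%N => K /leP le_NJK; have le_NK := leq_trans (leq_addr J N) le_NJK.
have := geom_near (K - N)%N (leP _); rewrite leq_subRL // => /(_ le_NJK).
rewrite Rminus_0_r Rabs_pos_eq; last first.
  by apply: Rmult_le_pos; [apply: Rabs_pos | apply: pow_le; lra].
by have := u_near (K - N)%N; rewrite subnKC //; lra.
Qed.

Lemma is_lim_seq_C (u : nat -> C) (l : C) :
  is_lim_seq (fun K => Re (u K)) (Re l) -> is_lim_seq (fun K => Im (u K)) (Im l) ->
  filterlim u eventually (locally l).
Proof.
move=> /is_lim_seq_spec Re_lim /is_lim_seq_spec Im_lim; apply/filterlim_locally => eps.
by apply: filter_imp (filter_and _ _ (Re_lim eps) (Im_lim eps)) => K [].
Qed.

Definition kappa_partial_sum x K n :=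
  (\sum_(k <- iota 0 K) RtoC ((/ 2) ^ k.+1) * dconv (onepow k) (idf x) n)%C.

Lemma dconv_onepowS x k n : 0 < n ->
  dconv (onepow k.+1) (idf x) n
  = (dconv (onepow k) (idf x) n + \sum_(d <- proper_divisors n) dconv (onepow k) (idf x) d)%C.
Proof.
move=> n_gt0; rewrite [onepow _]/= dconvA_at // dconvC_at // dconvE big_divisors_proper //=.
by rewrite divnn n_gt0 /onef Cmult_1_r -big_distrl /= Cmult_1_r.
Qed.

Lemma kappa_partial_sumS x K n : 0 < n ->
  kappa_partial_sum x K.+1 n
  = (RtoC (/ 2) * (cpow n x + \sum_(d <- proper_divisors n) kappa_partial_sum x K d
                   + kappa_partial_sum x K n))%C.
Proof.
move=> n_gt0; rewrite /kappa_partial_sum.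
set a := fun k d => (RtoC ((/ 2) ^ k.+1) * dconv (onepow k) (idf x) d)%C.
have a_succ k : a k.+1 n = (RtoC (/ 2) * (\sum_(d <- proper_divisors n) a k d + a k n))%C.
  rewrite /a dconv_onepowS // -big_distrr /= RtoC_mult; ring.
have iotaS : iota 0 K.+1 = 0 :: map S (iota 0 K) by rewrite /= -(iotaDl 1).
rewrite iotaS big_cons big_map (eq_bigr (fun k => a k.+1 n)) //.
under eq_bigr do rewrite a_succ.
rewrite -big_distrr big_split (exchange_big _ _ (proper_divisors n)) [LHS]/=.
by rewrite (dconv_epsl _ _ n_gt0) Rmult_1_r /a -[cpow n x]/(idf x n); ring.
Qed.

Section RealLinearFunctional.

Variable pr : C -> R.
Hypothesis pr_add : forall a b, pr (a + b)%C = (pr a + pr b)%R.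
Hypothesis pr_scal : forall (r : R) z, pr (RtoC r * z)%C = (r * pr z)%R.

Lemma is_lim_seq_pr_sum (r : seq nat) (F : nat -> nat -> C) (L : nat -> C) :
  (forall d, d \in r -> is_lim_seq (fun K => pr (F K d)) (pr (L d))) ->
  is_lim_seq (fun K => pr (\sum_(d <- r) F K d)%C) (pr (\sum_(d <- r) L d)%C).
Proof.
elim: r => [|d r IH] F_lim.
  rewrite big_nil; apply: (is_lim_seq_ext (fun=> pr (RtoC 0))) => [K|].
    by rewrite big_nil.
  exact: is_lim_seq_const.
rewrite big_cons pr_add.
apply: (is_lim_seq_ext (fun K => pr (F K d) + pr (\sum_(e <- r) F K e)%C)%R) => [K|].
  by rewrite big_cons pr_add.
apply: is_lim_seq_plus'; first by apply: F_lim; rewrite mem_head.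
by apply: IH => e e_r; apply: F_lim; rewrite in_cons e_r orbT.
Qed.

Lemma is_lim_seq_kappa_partial_sum x n :
  0 < n -> is_lim_seq (fun K => pr (kappa_partial_sum x K n)) (pr (kappa x n)).
Proof.
elim/ltn_ind: n => n IH n_gt0.
apply: (is_lim_seq_mean_step _
          (fun K => pr (cpow n x + \sum_(d <- proper_divisors n) kappa_partial_sum x K d)%C)).
  rewrite (kappa_rec _ _ n_gt0) pr_add.
  apply: (is_lim_seq_ext (fun K => pr (cpow n x)
            + pr (\sum_(d <- proper_divisors n) kappa_partial_sum x K d)%C)%R) => [K|].
    by rewrite pr_add.
  apply: is_lim_seq_plus'; first exact: is_lim_seq_const.
  apply: is_lim_seq_pr_sum => d /mem_proper_divisors /andP[d_gt0 lt_dn].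
  exact: IH.
by move=> K; rewrite kappa_partial_sumS // pr_scal pr_add; lra.
Qed.

End RealLinearFunctional.

Lemma sum_n_kappa_term x n K :
  sum_n (fun k => RtoC ((/ 2) ^ k.+1) * dconv (onepow k) (idf x) n)%C K
  = kappa_partial_sum x K.+1 n.
Proof.
elim: K => [|K IH]; first by rewrite sum_O /kappa_partial_sum big_seq1.
by rewrite sum_Sn IH /kappa_partial_sum -(addn1 K.+1) iotaD big_cat big_seq1 add0n addn1.
Qed.

Lemma kappa_series x n : 0 < n ->
  is_series (fun k => RtoC ((/ 2) ^ k.+1) * dconv (onepow k) (idf x) n)%C (kappa x n).
Proof.
move=> n_gt0; apply: (filterlim_ext (fun K => kappa_partial_sum x K.+1 n)).
  by move=> K; rewrite sum_n_kappa_term.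
apply: is_lim_seq_C; apply/(is_lim_seq_incr_1 (fun K => _ (kappa_partial_sum x K n))).
  by apply: is_lim_seq_kappa_partial_sum => // r z; rewrite re_scal_l.
by apply: is_lim_seq_kappa_partial_sum => // r z; rewrite im_scal_l.
Qed.

Theorem theorem2 (x y : C) :
  (* 1 *) aeq (dconv (kappa x) (dsigma y)) (dconv (kappa y) (dsigma x)) /\
  (* 2 *) aeq (kappa x) (scalf (Cinv (RtoC 2)) (addf (idf x) (dconv onef (kappa x)))) /\
  (* 3 *) (forall n : nat, (0 < n)%N ->
             is_series (fun k : nat =>
                 Cmult (RtoC ((/ 2) ^ (S k))%R) (dconv (onepow k) (idf x) n))
               (kappa x n)) /\
  (* 4 *) aeq (kappa x) (dconv (jordan x) (kappa (RtoC 0))) /\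
  (* 5 *) aeq (dinv (kappa x)) (dconv (dinv (jordan x)) (subf (scalf (RtoC 2) moebius) epsf)) /\
  (* 6 *) aeq (dsigma x) (dconv (kappa x) (subf (scalf (RtoC 2) onef) ndiv)).
Proof.
split; first exact: kappa_dsigmaC.
split; first exact: kappa_mean.
split; first by move=> n; apply: kappa_series.
split; first exact: kappa_jordan.
split; first exact: dinv_kappa.
exact: dsigma_kappa.
Qed.
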